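(* Let $\gamma\in\mathbb Q\cap(0,1)$ and let $\gamma_2$ be its right Farey parent. For every $\beta\in(1,2)$ with $$\mathbf d_\beta\in[\,w_\gamma^\infty,\ w_{\gamma_2}w_\gamma^\infty\,]$$ in the lexicographic order, one has $\gamma(\beta)=\gamma$.
   Context: For $\beta\in(1,2)$, let $\mathbf d_\beta=d_1d_2\dots$ be the quasi-greedy expansion of $1$. It equals the greedy expansion $\tilde d_i=\lfloor\beta T_\beta^{i-1}(1)\rfloor$ of $1$ if that expansion does not end in $0^\infty$. If instead the greedy expansion is $\tilde d_1\dots\tilde d_k0^\infty$ with $\tilde d_k=1$, then $\mathbf d_\beta=(\tilde d_1\dots\tilde d_{k-1}0)^\infty$. The admissible set is $X_\beta=\{(x_i)\in\{0,1\}^{\mathbb N}: x_jx_{j+1}\dots\preceq\mathbf d_\beta\ \forall j\}$, where $\preceq$ is the lexicographic order. Farey tree of words: set $w_{0/1}=0$ and $w_{1/1}=1$. Two fractions $a/b<c/d$ are neighbours if $bc-ad=1$. For neighbours $\gamma_1=a/b<\gamma_2=c/d$, put $\gamma_1\oplus\gamma_2=(a+c)/(b+d)$ and $w_{\gamma_1\oplus\gamma_2}=w_{\gamma_2}w_{\gamma_1}$. Every rational $\gamma\in(0,1)$ arises uniquely as $\gamma=\gamma_1\oplus\gamma_2$ with neighbours $\gamma_1<\gamma_2$; these are its left and right Farey parents. The word $w_\gamma$ is the lexicographically maximal cyclic shift of the cyclically balanced word of length $q$ with $p$ ones, where $\gamma=p/q$. $\gamma(\beta)$: the number $\gamma\in[0,1]$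 associated to the lexicographically maximal admissible balanced sequence. Equivalently, $\gamma(\beta)=\sup\{\gamma\in\mathbb Q\cap[0,1]: w_\gamma^\infty\in X_\beta\}$. It satisfies: $w_\gamma^\infty$ is admissible iff $\gamma\le\gamma(\beta)$. *)

From Stdlib Require Import Reals Lra Lia Arith List.
Import ListNotations.
Open Scope R_scope.

(* floor on reals: up x is the unique integer with x < up x <= x + 1 *)
Definition rfloor (x : R) : Z := (up x - 1)%Z.

Definition Tb (beta x : R) : R := beta * x - IZR (rfloor (beta * x)).

Fixpoint Titer (beta : R) (n : nat) (x : R) : R :=
  match n with O => x | S k => Tb beta (Titer beta k x) end.

(* greedy expansion of 1, 0-indexed: greedy beta i = d~_{i+1} = floor(beta T^i(1)) *)
Definition greedy (beta : R) (i : nat) : nat :=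
  Z.to_nat (rfloor (beta * Titer beta i 1)).

(* d is the quasi-greedy expansion of 1 in base beta (0-indexed: d 0 = d_1) *)
Definition quasi_greedy (beta : R) (d : nat -> nat) : Prop :=
  ((forall m, exists j, (m < j)%nat /\ greedy beta j <> 0%nat) /\
   (forall n, d n = greedy beta n))
  \/
  (exists m, greedy beta m = 1%nat /\ (forall j, (m < j)%nat -> greedy beta j = 0%nat) /\
     (forall n, d n = (let r := (n mod (S m))%nat in
                       if Nat.eqb r m then 0%nat else greedy beta r))).

Definition lex_le (a b : nat -> nat) : Prop :=
  (forall i, a i = b i) \/
  (exists n, (forall i, (i < n)%nat -> a i = b i) /\ (a n < b n)%nat).

Definition admissible (d : nat -> nat) (x : nat -> nat) : Prop :=
  (forall i, (x i <= 1)%nat) /\ (forall j, lex_le (fun i => x (j + i)%nat) d).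

(* Farey words via descent in the Farey (Stern-Brocot) tree: the current interval
   is a/b < c/d (neighbours) with words wl = w_{a/b}, wr = w_{c/d};
   the mediant word is w_{a/b (+) c/d} = w_{c/d} w_{a/b}. *)
Fixpoint sb (fuel p q a b c d : nat) (wl wr : list nat) : list nat :=
  match fuel with
  | O => []
  | S f =>
      let m1 := (a + c)%nat in let m2 := (b + d)%nat in
      if Nat.eqb (p * m2) (m1 * q) then wr ++ wl
      else if Nat.ltb (p * m2) (m1 * q) then sb f p q a b m1 m2 wl (wr ++ wl)
      else sb f p q m1 m2 c d (wr ++ wl) wr
  end.

Definition farey_word (p q : nat) : list nat :=
  if Nat.eqb p 0 then [0%nat]
  else if Nat.eqb p q then [1%nat]
  else sb q p q 0 1 1 1 [0%nat] [1%nat].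

Definition per (w : list nat) (n : nat) : nat := nth (n mod length w) w 0%nat.

Definition prefix_per (u w : list nat) (n : nat) : nat :=
  if Nat.ltb n (length u) then nth n u 0%nat else per w (n - length u).

Definition admissible_gammas (d : nat -> nat) (x : R) : Prop :=
  exists p q : nat, (0 < q)%nat /\ (p <= q)%nat /\ Nat.gcd p q = 1%nat /\
    x = INR p / INR q /\ admissible d (per (farey_word p q)).

Definition gamma_beta_is (d : nat -> nat) (g : R) : Prop :=
  is_lub (admissible_gammas d) g.

From Stdlib Require Import Reals Arith List Lia Lra Psatz Classical.
Import ListNotations.
Open Scope R_scope.

(* The Farey word w_{p/q} is the upper Christoffel word, whose letters are the
   increments of n |-> ceil(n p / q).  Comparing 0-1 sequences through their
   prefix sums, every shift of w_{p/q}^oo is at most w_{p/q}^oo because the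
   ceiling is subadditive, so w_{p/q}^oo is admissible as soon as it lies below
   d_beta.  For the right parent c/d the prefix sums of w_{c/d} w_{p/q}^oo are
   floor(n p / q) + 1 (n > 0), which is at most ceil(n p' / q') for every
   p'/q' > p/q and differs from it somewhere; hence w_{p'/q'}^oo is strictly
   above w_{c/d} w_{p/q}^oo >= d_beta and is not admissible. *)

Section UpperChristoffel.
Local Open Scope nat_scope.

Definition ceil_frac (x y i : nat) : nat := (i * x + y - 1) / y.

Lemma ceil_frac_spec x y i : 0 < y ->
  i * x <= ceil_frac x y i * y < i * x + y.
Proof.
  intros Hy. unfold ceil_frac.
  pose proof (Nat.div_mod (i * x + y - 1) y ltac:(lia)).
  pose proof (Nat.mod_upper_bound (i * x + y - 1) y ltac:(lia)).
  nia.
Qed.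

Lemma ceil_frac_unique x y i k : 0 < y ->
  i * x <= k * y < i * x + y -> ceil_frac x y i = k.
Proof.
  intros Hy Hk. symmetry. unfold ceil_frac.
  apply (Nat.div_unique _ _ _ (i * x + y - 1 - k * y)); nia.
Qed.

Lemma ceil_frac_0 x y : 0 < y -> ceil_frac x y 0 = 0.
Proof. intros Hy. apply ceil_frac_unique; lia. Qed.

Lemma ceil_frac_le_mono x y i j : i <= j -> ceil_frac x y i <= ceil_frac x y j.
Proof. intros Hij. apply Nat.Div0.div_le_mono. nia. Qed.

Lemma ceil_frac_add_period x y i k : 0 < y ->
  ceil_frac x y (i + k * y) = ceil_frac x y i + k * x.
Proof. intros Hy. pose proof (ceil_frac_spec x y i Hy). apply ceil_frac_unique; nia. Qed.

Lemma ceil_frac_subadd x y i j : 0 < y ->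
  ceil_frac x y (i + j) <= ceil_frac x y i + ceil_frac x y j.
Proof.
  intros Hy.
  pose proof (ceil_frac_spec x y i Hy). pose proof (ceil_frac_spec x y j Hy).
  pose proof (ceil_frac_spec x y (i + j) Hy). nia.
Qed.

Lemma ceil_frac_succ_le x y i : 0 < y -> x <= y ->
  ceil_frac x y (S i) <= S (ceil_frac x y i).
Proof.
  intros Hy Hxy.
  pose proof (ceil_frac_spec x y i Hy). pose proof (ceil_frac_spec x y (S i) Hy). nia.
Qed.

Lemma ceil_frac_mediant_l a b c d i : 0 < b -> 0 < d -> b * c = a * d + 1 -> i <= d ->
  ceil_frac (a + c) (b + d) i = ceil_frac c d i.
Proof.
  intros Hb Hd Hn Hi. pose proof (ceil_frac_spec c d i Hd).
  apply ceil_frac_unique; nia.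
Qed.

Lemma ceil_frac_mediant_r a b c d j : 0 < b -> 0 < d -> b * c = a * d + 1 -> j <= b ->
  ceil_frac (a + c) (b + d) (d + j) = c + ceil_frac a b j.
Proof.
  intros Hb Hd Hn Hj. pose proof (ceil_frac_spec a b j Hb).
  apply ceil_frac_unique; nia.
Qed.

Definition upper_christoffel (x y : nat) : list nat :=
  map (fun i => ceil_frac x y (S i) - ceil_frac x y i) (seq 0 y).

Lemma upper_christoffel_length x y : length (upper_christoffel x y) = y.
Proof. unfold upper_christoffel. rewrite length_map, length_seq. reflexivity. Qed.

Lemma nth_upper_christoffel x y i : i < y ->
  nth i (upper_christoffel x y) 0 = ceil_frac x y (S i) - ceil_frac x y i.
Proof.
  intros Hi. unfold upper_christoffel.
  rewrite nth_indep with (d' := ceil_frac x y 1 - ceil_frac x y 0)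
    by (rewrite length_map, length_seq; lia).
  rewrite (map_nth (fun i => ceil_frac x y (S i) - ceil_frac x y i)), seq_nth by lia.
  reflexivity.
Qed.

Lemma map_seq_add (F : nat -> nat) s t n :
  map F (seq (s + t) n) = map (fun j => F (s + j)) (seq t n).
Proof.
  revert t; induction n as [|n IH]; intros t; simpl; [reflexivity|].
  rewrite <- (IH (S t)), Nat.add_succ_r. reflexivity.
Qed.

Lemma upper_christoffel_mediant a b c d : 0 < b -> 0 < d -> b * c = a * d + 1 ->
  upper_christoffel (a + c) (b + d) = upper_christoffel c d ++ upper_christoffel a b.
Proof.
  intros Hb Hd Hn. unfold upper_christoffel.
  replace (seq 0 (b + d)) with (seq 0 d ++ seq (d + 0) b)
    by (rewrite Nat.add_0_r, Nat.add_comm, seq_app; reflexivity).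
  rewrite map_app, map_seq_add.
  f_equal; apply map_ext_in; intros i Hi; apply in_seq in Hi.
  - rewrite !ceil_frac_mediant_l by lia. reflexivity.
  - rewrite <- Nat.add_succ_r, !ceil_frac_mediant_r by lia. lia.
Qed.

(* [sb] walks down the Stern-Brocot tree with p/q strictly inside the current
   pair of neighbours a/b < c/d; the mediant identity keeps both words Christoffel. *)
Lemma sb_upper_christoffel p q : 0 < p -> p < q -> Nat.gcd p q = 1 ->
  forall fuel a b c d, 0 < b -> 0 < d -> b * c = a * d + 1 ->
  a * q < p * b -> p * d < c * q -> q + 1 <= fuel + b + d ->
  sb fuel p q a b c d (upper_christoffel a b) (upper_christoffel c d) = upper_christoffel p q.
Proof.
  intros Hp Hpq Hg fuel.
  induction fuel as [|fuel IH]; intros a b c d Hb Hd Hn Hl Hr Hfuel; [nia|].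
  simpl. rewrite <- upper_christoffel_mediant by lia.
  destruct (Nat.eqb_spec (p * (b + d)) ((a + c) * q)) as [E|E].
  - set (t := p * b - a * q).
    assert (Hq : q = (b + d) * t) by (unfold t; nia).
    assert (Hp' : p = (a + c) * t) by (unfold t; nia).
    assert (Ht : Nat.divide t 1).
    { rewrite <- Hg. apply Nat.gcd_greatest; [exists (a + c) | exists (b + d)]; lia. }
    apply Nat.divide_1_r in Ht. rewrite Hq, Hp', Ht, !Nat.mul_1_r. reflexivity.
  - destruct (Nat.ltb_spec (p * (b + d)) ((a + c) * q)); apply IH; nia.
Qed.

Lemma farey_word_upper_christoffel p q : 0 < p -> p <= q -> Nat.gcd p q = 1 ->
  farey_word p q = upper_christoffel p q.
Proof.
  intros Hp Hpq Hg. unfold farey_word.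
  destruct (Nat.eqb_spec p 0) as [|_]; [lia|].
  destruct (Nat.eqb_spec p q) as [<-|Hne].
  - rewrite Nat.gcd_diag in Hg. subst. reflexivity.
  - change [0] with (upper_christoffel 0 1). change [1] with (upper_christoffel 1 1).
    apply sb_upper_christoffel; lia.
Qed.

Lemma per_upper_christoffel x y n : 0 < y ->
  per (upper_christoffel x y) n = ceil_frac x y (S n) - ceil_frac x y n.
Proof.
  intros Hy. unfold per.
  rewrite upper_christoffel_length, nth_upper_christoffel by (apply Nat.mod_upper_bound; lia).
  pose proof (Nat.div_mod_eq n y) as Hn.
  set (r := n mod y) in *. set (k := n / y) in *.
  replace n with (r + k * y) by lia. rewrite <- Nat.add_succ_l, !ceil_frac_add_period by lia.
  lia.
Qed.

Fixpoint psum (u : nat -> nat) (n : nat) : nat :=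
  match n with O => 0 | S k => psum u k + u k end.

Lemma psum_ext u v : (forall i, u i = v i) -> forall n, psum u n = psum v n.
Proof. intros Huv n. induction n as [|n IH]; simpl; [|rewrite IH, Huv]; reflexivity. Qed.

Lemma psum_increments (X : nat -> nat) n : (forall i, X i <= X (S i)) ->
  psum (fun i => X (S i) - X i) n = X n - X 0.
Proof.
  intros HX. induction n as [|n IH]; simpl; [lia|].
  rewrite IH. pose proof (HX n).
  assert (X 0 <= X n) by (clear IH; induction n; [|specialize (HX n)]; lia). lia.
Qed.

Lemma psum_per_upper_christoffel x y n : 0 < y ->
  psum (per (upper_christoffel x y)) n = ceil_frac x y n.
Proof.
  intros Hy. rewrite (psum_ext _ (fun i => ceil_frac x y (S i) - ceil_frac x y i)).
  - rewrite psum_increments, ceil_frac_0 by (auto using ceil_frac_le_mono). lia.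
  - intros i. apply per_upper_christoffel, Hy.
Qed.

Lemma lex_le_trans u v w : lex_le u v -> lex_le v w -> lex_le u w.
Proof.
  intros [E|[n1 [A1 B1]]] [E'|[n2 [A2 B2]]].
  - left. intros i. rewrite E; auto.
  - right. exists n2. split; [intros i Hi|]; rewrite E; auto.
  - right. exists n1. split; [intros i Hi|]; rewrite <- E'; auto.
  - right. exists (min n1 n2). split.
    + intros i Hi. rewrite A1, A2 by lia. reflexivity.
    + destruct (lt_eq_lt_dec n1 n2) as [[Hlt|<-]|Hgt].
      * rewrite Nat.min_l, <- (A2 n1) by lia. assumption.
      * rewrite Nat.min_id. lia.
      * rewrite Nat.min_r, (A1 n2) by lia. assumption.
Qed.

Lemma lex_le_antisym u v : lex_le u v -> lex_le v u -> forall i, u i = v i.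
Proof.
  intros [E|[n1 [A1 B1]]] Hvu; [exact E|].
  destruct Hvu as [E'|[n2 [A2 B2]]]; [intros i; symmetry; apply E'|exfalso].
  destruct (lt_eq_lt_dec n1 n2) as [[Hlt|<-]|Hgt].
  - rewrite A2 in B1 by lia. lia.
  - lia.
  - rewrite A1 in B2 by lia. lia.
Qed.

Lemma first_difference (u v : nat -> nat) i0 : u i0 <> v i0 ->
  exists n, (forall i, i < n -> u i = v i) /\ u n <> v n.
Proof.
  induction i0 as [i0 IH] using lt_wf_ind. intros Hi0.
  destruct (classic (exists i, i < i0 /\ u i <> v i)) as [[i [Hi Hne]]|Hnone].
  - exact (IH i Hi Hne).
  - exists i0. split; [|exact Hi0].
    intros i Hi. apply NNPP. intros Hne. apply Hnone. exists i. auto.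
Qed.

Lemma lex_le_of_psum_le u v : (forall n, psum u n <= psum v n) -> lex_le u v.
Proof.
  intros Hle. destruct (classic (forall i, u i = v i)) as [E|E]; [left; exact E|].
  apply not_all_ex_not in E as [i0 Hi0].
  destruct (first_difference u v i0 Hi0) as [n [Heq Hne]].
  right. exists n. split; [exact Heq|].
  assert (Hpre : psum u n = psum v n).
  { clear Hle Hne. induction n as [|n IH]; simpl; [reflexivity|].
    rewrite IH, (Heq n) by (first [lia | intros i Hi; apply Heq; lia]). reflexivity. }
  specialize (Hle (S n)). simpl in Hle. lia.
Qed.

Lemma shift_per_upper_christoffel_le x y j : 0 < y ->
  lex_le (fun i => per (upper_christoffel x y) (j + i)) (per (upper_christoffel x y)).
Proof.
  intros Hy. apply lex_le_of_psum_le. intros n.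
  rewrite psum_per_upper_christoffel by exact Hy.
  rewrite (psum_ext _ (fun i => ceil_frac x y (j + S i) - ceil_frac x y (j + i))).
  - rewrite (psum_increments (fun i => ceil_frac x y (j + i)))
      by (intros; apply ceil_frac_le_mono; lia).
    rewrite Nat.add_0_r. pose proof (ceil_frac_subadd x y j n Hy). lia.
  - intros i. rewrite per_upper_christoffel, Nat.add_succ_r by exact Hy. reflexivity.
Qed.

Lemma admissible_per_upper_christoffel x y D : 0 < y -> x <= y ->
  lex_le (per (upper_christoffel x y)) D -> admissible D (per (upper_christoffel x y)).
Proof.
  intros Hy Hxy HD. split.
  - intros i. rewrite per_upper_christoffel by exact Hy.
    pose proof (ceil_frac_succ_le x y i Hy Hxy). lia.
  - intros j. exact (lex_le_trans _ _ _ (shift_per_upper_christoffel_le x y j Hy) HD).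
Qed.

Definition succ_floor_frac (p q n : nat) : nat :=
  match n with O => 0 | S _ => n * p / q + 1 end.

Lemma succ_floor_frac_unique p q n k : 0 < n -> k * q <= n * p < k * q + q ->
  succ_floor_frac p q n = k + 1.
Proof.
  intros Hn Hk. destruct n as [|n]; [lia|]. cbn [succ_floor_frac]. f_equal.
  symmetry. apply (Nat.div_unique _ _ _ (S n * p - k * q)); lia.
Qed.

Lemma succ_floor_frac_le_mono p q i j : i <= j -> succ_floor_frac p q i <= succ_floor_frac p q j.
Proof.
  intros Hij. destruct i as [|i]; [simpl; lia|]. destruct j as [|j]; [lia|]. cbn [succ_floor_frac].
  pose proof (Nat.Div0.div_le_mono (S i * p) (S j * p) q (Nat.mul_le_mono_r _ _ p Hij)). lia.
Qed.

Section RightParent.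

Variables p q c d : nat.
Hypothesis Hd : 0 < d.
Hypothesis Hdq : d <= q.
Hypothesis Hright : c * q = d * p + 1.

Lemma ceil_frac_right_parent m : m <= q -> ceil_frac c d m = succ_floor_frac p q m.
Proof.
  intros Hm. destruct (Nat.eq_dec m 0) as [->|Hm0]; [apply ceil_frac_0, Hd|].
  pose proof (ceil_frac_spec c d m Hd) as Hk. set (k := ceil_frac c d m) in *.
  replace k with (k - 1 + 1) by nia. symmetry. apply succ_floor_frac_unique; [lia|].
  split; nia.
Qed.

Lemma succ_floor_frac_shift m : succ_floor_frac p q (d + m) = c + ceil_frac p q m.
Proof.
  assert (Hq : 0 < q) by lia.
  destruct c as [|c']; [lia|].
  pose proof (ceil_frac_spec p q m Hq). replace (S c' + ceil_frac p q m) with (c' + ceil_frac p q m + 1) by lia.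
  apply succ_floor_frac_unique; nia.
Qed.

Lemma psum_right_parent_prefix n :
  psum (prefix_per (upper_christoffel c d) (upper_christoffel p q)) n = succ_floor_frac p q n.
Proof.
  rewrite (psum_ext _ (fun i => succ_floor_frac p q (S i) - succ_floor_frac p q i)).
  - rewrite psum_increments by (intros; apply succ_floor_frac_le_mono; lia). simpl. lia.
  - intros i. unfold prefix_per. rewrite upper_christoffel_length.
    destruct (Nat.ltb_spec i d).
    + rewrite nth_upper_christoffel, !ceil_frac_right_parent by lia. reflexivity.
    + rewrite per_upper_christoffel by lia.
      replace i with (d + (i - d)) at 3 4 by lia. rewrite <- Nat.add_succ_r, !succ_floor_frac_shift.
      lia.
Qed.

End RightParent.

Lemma succ_floor_frac_le_ceil_frac p q p' q' n : 0 < q' -> p * q' < p' * q ->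
  succ_floor_frac p q n <= ceil_frac p' q' n.
Proof.
  intros Hq' Hlt. destruct n as [|n]; [simpl; lia|]. cbn [succ_floor_frac].
  pose proof (ceil_frac_spec p' q' (S n) Hq') as Hk. set (k := ceil_frac p' q' (S n)) in *.
  pose proof (Nat.Div0.mul_div_le (S n * p) q) as Hf. set (f := S n * p / q) in *.
  destruct (Nat.lt_ge_cases f k) as [|Hkf]; [lia|exfalso].
  assert (k * q <= S n * p) by nia.
  assert (k * q * q' <= S n * p * q') by (apply Nat.mul_le_mono_r; assumption).
  assert (S n * p * q' < S n * p' * q) by nia.
  nia.
Qed.

(* At multiples of [q q'], [ceil_frac p' q'] is exactly linear while
   [succ_floor_frac p q] is linear plus one. *)
Lemma succ_floor_frac_neq_ceil_frac p q p' q' : 0 < q -> 0 < q' ->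
  exists n, succ_floor_frac p q n <> ceil_frac p' q' n.
Proof.
  intros Hq Hq'.
  assert (Hceil : forall k, ceil_frac p' q' (k * q * q') = k * q * p')
    by (intros k; apply ceil_frac_unique; nia).
  assert (Hfloor : forall k, 0 < k -> succ_floor_frac p q (k * q * q') = k * q' * p + 1)
    by (intros k Hk; apply succ_floor_frac_unique; nia).
  destruct (Nat.eq_dec (succ_floor_frac p q (1 * q * q')) (ceil_frac p' q' (1 * q * q'))) as [E|E].
  - exists (2 * q * q'). rewrite Hceil, Hfloor by lia. rewrite Hceil, Hfloor in E by lia. lia.
  - exists (1 * q * q'). exact E.
Qed.

Lemma not_lex_le_per_right_parent_prefix p q c d p' q' :
  0 < d -> d <= q -> c * q = d * p + 1 -> 0 < q' -> p * q' < p' * q ->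
  ~ lex_le (per (upper_christoffel p' q'))
      (prefix_per (upper_christoffel c d) (upper_christoffel p q)).
Proof.
  intros Hd Hdq Hright Hq' Hlt Hle.
  assert (Hge : lex_le (prefix_per (upper_christoffel c d) (upper_christoffel p q))
                  (per (upper_christoffel p' q'))).
  { apply lex_le_of_psum_le. intros n.
    rewrite psum_right_parent_prefix, psum_per_upper_christoffel by assumption.
    apply succ_floor_frac_le_ceil_frac; assumption. }
  destruct (succ_floor_frac_neq_ceil_frac p q p' q') as [n Hn]; [lia|assumption|].
  apply Hn. rewrite <- (psum_right_parent_prefix p q c d), <- psum_per_upper_christoffel by assumption.
  apply psum_ext, lex_le_antisym; assumption.
Qed.

Lemma gcd_right_parent a b c d : b * c = a * d + 1 -> Nat.gcd c d = 1.
Proof.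
  intros Hn. apply Nat.divide_1_r, (Nat.divide_add_cancel_r _ (a * d)).
  - apply Nat.divide_mul_r, Nat.gcd_divide_r.
  - rewrite <- Hn. apply Nat.divide_mul_r, Nat.gcd_divide_l.
Qed.

End UpperChristoffel.

Lemma gamma_beta_is_of_max (D : nat -> nat) (p q : nat) :
  (0 < q)%nat -> (p <= q)%nat -> Nat.gcd p q = 1%nat ->
  admissible D (per (farey_word p q)) ->
  (forall p' q', (0 < q')%nat -> (p' <= q')%nat -> Nat.gcd p' q' = 1%nat ->
     admissible D (per (farey_word p' q')) -> (p' * q <= p * q')%nat) ->
  gamma_beta_is D (INR p / INR q).
Proof.
  intros Hq Hpq Hg Hadm Hmax. split.
  - intros x [p' [q' [Hq' [Hpq' [Hg' [-> Hadm']]]]]].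
    assert (Hcross : INR p' * INR q <= INR p * INR q')
      by (rewrite <- !mult_INR; apply le_INR, Hmax; assumption).
    assert (0 < INR q) by (apply lt_0_INR; assumption).
    assert (0 < INR q') by (apply lt_0_INR; assumption).
    apply (Rmult_le_reg_r (INR q * INR q')); [nra|].
    replace (INR p' / INR q' * (INR q * INR q')) with (INR p' * INR q) by (field; lra).
    replace (INR p / INR q * (INR q * INR q')) with (INR p * INR q') by (field; lra).
    exact Hcross.
  - intros g Hg_ub. apply Hg_ub. exists p, q. exact (conj Hq (conj Hpq (conj Hg (conj eq_refl Hadm)))).
Qed.

Theorem mainTheorem2 (p q a b c d : nat)
  (hp : (0 < p)%nat) (hpq : (p < q)%nat) (hcop : Nat.gcd p q = 1%nat)
  (hb : (0 < b)%nat) (hd : (0 < d)%nat)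
  (hac : (a + c)%nat = p) (hbd : (b + d)%nat = q)
  (hnb : (b * c = a * d + 1)%nat)
  (beta : R) (hbeta1 : 1 < beta) (hbeta2 : beta < 2)
  (dbeta : nat -> nat) (hq : quasi_greedy beta dbeta)
  (hlo : lex_le (per (farey_word p q)) dbeta)
  (hhi : lex_le dbeta (prefix_per (farey_word c d) (farey_word p q))) :
  gamma_beta_is dbeta (INR p / INR q).
Proof.
  assert (Hright : (c * q = d * p + 1)%nat) by (subst; nia).
  assert (Hcd : (0 < c <= d)%nat) by nia.
  rewrite (farey_word_upper_christoffel c d), (farey_word_upper_christoffel p q) in hhi
    by (try apply (gcd_right_parent a b); lia).
  rewrite (farey_word_upper_christoffel p q) in hlo by lia.
  apply gamma_beta_is_of_max; try lia.
  - rewrite farey_word_upper_christoffel by lia.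
    apply admissible_per_upper_christoffel; [lia | lia | exact hlo].
  - intros p' q' Hq' Hpq' Hg' [_ Hshift].
    destruct (Nat.le_gt_cases (p' * q) (p * q')) as [|Hlt]; [assumption|exfalso].
    rewrite farey_word_upper_christoffel in Hshift by nia.
    apply (not_lex_le_per_right_parent_prefix p q c d p' q'); try lia.
    exact (lex_le_trans _ _ _ (Hshift 0%nat) hhi).
Qed.
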